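(* Let $\kappa$ be an infinite cardinal and let $E$ be the range of the map $f\colon S\to S$, $f(A,B,C)=(\kappa\setminus A,\ \kappa\setminus(B\cup C),\ \kappa\setminus(A\cup B\cup C))$. Then $E=\{(A,B,A\cap B): A,B\in\mathcal{F}(\kappa)\}$, and the map $(A,B,A\cap B)\mapsto(A,B)$ is an isomorphism from $E$ (with the order of $S$) onto the Boolean lattice $\mathcal{F}(\kappa)\times\mathcal{F}(\kappa)$.
   Context: $\mathcal{F}(\kappa)$ is the Boolean lattice of subsets $X\subseteq\kappa$ that are finite or cofinite. Let $\mu(A,B,C)=(A\cap B)\cup(A\cap C)\cup(B\cap C)$; a triple is balanced if $A\cap B=A\cap C=B\cap C$. $S$ is the set of balanced triples $(A,B,C)\in\mathcal{F}(\kappa)^3$ with $C\setminus\mu(A,B,C)$ finite, ordered componentwise; it is a bounded lattice. *)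

From mathcomp Require Import all_boot all_order.
From mathcomp Require Import boolp classical_sets functions cardinality.
Set Implicit Arguments. Unset Strict Implicit. Unset Printing Implicit Defensive.
Local Open Scope classical_set_scope.

(* The cardinal kappa is represented by a type T (its set of elements). *)

Definition Fk {T : Type} (X : set T) : Prop := finite_set X \/ finite_set (~` X).

Definition mu {T : Type} (A B C : set T) : set T :=
  (A `&` B) `|` (A `&` C) `|` (B `&` C).

Definition balanced {T : Type} (A B C : set T) : Prop :=
  A `&` B = A `&` C /\ A `&` C = B `&` C.

Definition triple (T : Type) := (set T * set T * set T)%type.

Definition S {T : Type} : set (triple T) :=
  [set t | let: (A, B, C) := t in
     [/\ Fk A, Fk B, Fk C, balanced A B C & finite_set (C `\` mu A B C)]].

Definition le3 {T : Type} (s t : triple T) : Prop :=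
  let: (A, B, C) := s in let: (A', B', C') := t in
  [/\ A `<=` A', B `<=` B' & C `<=` C'].

Definition le2 {T : Type} (p q : set T * set T) : Prop :=
  p.1 `<=` q.1 /\ p.2 `<=` q.2.

Definition fmap {T : Type} (t : triple T) : triple T :=
  let: (A, B, C) := t in (~` A, ~` (B `|` C), ~` (A `|` B `|` C)).

Definition E {T : Type} : set (triple T) := fmap @` S.

Definition proj12 {T : Type} (t : triple T) : set T * set T := t.1.

From mathcomp Require Import all_boot all_order.
From mathcomp Require Import boolp classical_sets functions cardinality.
Local Open Scope classical_set_scope.

(* By De Morgan, f(A, B, C) = (A', B', A' ∩ B') with A' = κ∖A and
   B' = κ∖(B ∪ C); conversely every (X, Y, X ∩ Y) with X, Y ∈ F(κ) lies in S,
   and f sends it to (κ∖X, κ∖Y, (κ∖X) ∩ (κ∖Y)).  Hence E is the set of triples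
   (A, B, A ∩ B), whose third component is determined by, and monotone in, the
   first two. *)

Section FiniteCofinite.
Variable T : Type.
Implicit Types A B : set T.

Lemma Fk_setC A : Fk A -> Fk (~` A).
Proof. by case=> h; [right; rewrite setCK | left]. Qed.

Lemma Fk_setU A B : Fk A -> Fk B -> Fk (A `|` B).
Proof.
case=> hA; last by right; apply: sub_finite_set hA; rewrite setCU; apply: subIsetl.
case=> hB; first by left; rewrite finite_setU.
by right; apply: sub_finite_set hB; rewrite setCU; apply: subIsetr.
Qed.

Lemma Fk_setI A B : Fk A -> Fk B -> Fk (A `&` B).
Proof.
by move=> hA hB; rewrite -[A `&` B]setCK setCI; apply/Fk_setC/Fk_setU; apply: Fk_setC.
Qed.

End FiniteCofinite.

Lemma fmapE (T : Type) (A B C : set T) :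
  fmap (A, B, C) = (~` A, ~` (B `|` C), ~` A `&` ~` (B `|` C)).
Proof. by rewrite /fmap -setCU setUA. Qed.

Lemma S_meet_triple (T : Type) (A B : set T) :
  Fk A -> Fk B -> S (A, B, A `&` B).
Proof.
move=> hA hB; split; [by [] | by [] | exact: Fk_setI | |].
- by rewrite /balanced setIA setIid [B `&` _]setIC -setIA setIid.
- suff -> : A `&` B `\` mu A B (A `&` B) = set0 by [].
  by rewrite setD_eq0 => x hx; left; left.
Qed.

Lemma E_meet_triples (T : Type) :
  @E T = [set t | exists A B : set T, [/\ Fk A, Fk B & t = (A, B, A `&` B)]].
Proof.
apply/seteqP; split.
  move=> _ [[[A B] C] [hA hB hC _ _] <-]; rewrite fmapE.
  by exists (~` A), (~` (B `|` C)); split=> //; [exact: Fk_setC | exact/Fk_setC/Fk_setU].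
move=> _ [A [B [hA hB ->]]].
exists (~` A, ~` B, ~` A `&` ~` B); first by apply: S_meet_triple; apply: Fk_setC.
by rewrite fmapE setKI !setCK.
Qed.

Theorem lemma4p2 (T : Type) (kappa_inf : infinite_set [set: T]) :
  (@E T = [set t | exists A B : set T, [/\ Fk A, Fk B & t = (A, B, A `&` B)]])
  /\
  [/\ (forall t : triple T, E t -> Fk (proj12 t).1 /\ Fk (proj12 t).2),
      (forall s t : triple T, E s -> E t -> proj12 s = proj12 t -> s = t),
      (forall A B : set T, Fk A -> Fk B -> exists2 t, E t & proj12 t = (A, B))
    & (forall s t : triple T, E s -> E t -> (le3 s t <-> le2 (proj12 s) (proj12 t)))].
Proof.
split; first exact: E_meet_triples.
rewrite E_meet_triples; split.
- by move=> _ [A [B [hA hB ->]]].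
- by move=> _ _ [A [B [_ _ ->]]] [A' [B' [_ _ ->]]] [-> ->].
- by move=> A B hA hB; exists (A, B, A `&` B) => //; exists A, B.
- move=> _ _ [A [B [_ _ ->]]] [A' [B' [_ _ ->]]]; split; first by case.
  by case=> hAA' hBB'; split=> //; apply: setISS.
Qed.
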